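(* For every term $q$, if $q=_{\mathrm{CLC}}F$ then $q\to^*_{\mathrm{CLC}}F$. In particular $T\neq_{\mathrm{CLC}}F$.
   Context: Terms are built from variables and the constants $C,T,F,K,S$ by binary application (left-associative). $\mathrm{CLC}$ is the conditional term rewriting system with rules $C\,T\,x\,y\to x$; $C\,F\,x\,y\to y$; $C\,z\,x\,y\to x \Leftarrow x=y$; $K\,x\,y\to x$; $S\,x\,y\,z\to x\,z\,(y\,z)$, where $=$ is convertibility in the system itself, defined by levels: $R_0$ interprets the condition as the empty relation, $R_{n+1}$ interprets $=$ as the conversion relation of $\to_{R_n}$, and $\to_{\mathrm{CLC}}=\bigcup_n\to_{R_n}$ (rewriting closed under contexts). $\to^*_{\mathrm{CLC}}$ is the reflexive–transitive closure and $=_{\mathrm{CLC}}$ the conversion relation. *)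

From Stdlib Require Import Relations.

Inductive term : Type :=
| Var : nat -> term
| cC : term
| cT : term
| cF : term
| cK : term
| cS : term
| App : term -> term -> term.

(* One-step rewriting closed under contexts, where the condition x = y of
   the conditional rule C z x y -> x is interpreted by the relation E. *)
Inductive step (E : term -> term -> Prop) : term -> term -> Prop :=
| step_CT : forall x y, step E (App (App (App cC cT) x) y) x
| step_CF : forall x y, step E (App (App (App cC cF) x) y) y
| step_Cz : forall z x y, E x y -> step E (App (App (App cC z) x) y) x
| step_K  : forall x y, step E (App (App cK x) y) x
| step_S  : forall x y z, step E (App (App (App cS x) y) z) (App (App x z) (App y z))
| step_appL : forall t t' u, step E t t' -> step E (App t u) (App t' u)
| step_appR : forall t u u', step E u u' -> step E (App t u) (App t u').

Definition conv (R : relation term) : relation term := clos_refl_sym_trans term R.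

Fixpoint Rlev (n : nat) : relation term :=
  match n with
  | O => step (fun _ _ => False)
  | Datatypes.S m => step (conv (Rlev m))
  end.

Definition clc_step : relation term := fun t u => exists n, Rlev n t u.

Definition clc_red : relation term := clos_refl_trans term clc_step.
Definition clc_conv : relation term := conv clc_step.

From Stdlib Require Import Relations List Lia.
Import ListNotations.

(* [head_eval b t] says that [t] head-reduces to the boolean constant [boolc b]
   (T or F), where a conditional [C z x y] in head position may be contracted to
   [x] when [z] evaluates to T, to [y] when [z] evaluates to F, and, when [x] and
   [y] are convertible, provided both branches evaluate to [b].  Every such
   derivation is a genuine CLC reduction ([head_eval_sound]).

   The heart of the proof is that [head_eval] is invariant under CLC-conversion.
   Since CLC is defined by levels, we show by induction on [n] that the
   condition [cond n] of level [n] "respects" [head_eval]: related terms evaluate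
   alike in every applicative context.  For a condition [E] contained in
   conversion and respecting [head_eval], head evaluation is preserved forwards
   and backwards by parallel contraction [par E] of redexes (parallel because
   the [S] rule duplicates its argument), hence by conversion of [step E], which
   is the condition of the next level.

   The theorem follows: [q = F] yields [head_eval false q], hence [q ->* F];
   and [T = F] would yield [head_eval false T], which is impossible. *)

(* The condition relation interpreting [x = y] at level [n], so that
   [Rlev n] is exactly [step (cond n)]. *)
Definition cond (n : nat) : relation term :=
  match n with
  | O => fun _ _ => False
  | Datatypes.S m => conv (Rlev m)
  end.

Lemma Rlev_cond (n : nat) : Rlev n = step (cond n).
Proof. now destruct n. Qed.

Lemma step_mono (E E' : relation term) :
  inclusion term E E' -> inclusion term (step E) (step E').
Proof. intros HE t u Hs; induction Hs; constructor; auto. Qed.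

Lemma conv_mono (R R' : relation term) :
  inclusion term R R' -> inclusion term (conv R) (conv R').
Proof.
  intros HR t u Hc; induction Hc as [x y H | x | x y _ IH | x y z _ IH1 _ IH2].
  - now apply rst_step, HR.
  - apply rst_refl.
  - now apply rst_sym.
  - now apply rst_trans with y.
Qed.

Lemma cond_succ (n : nat) : inclusion term (cond n) (cond (Datatypes.S n)).
Proof.
  induction n as [|n IH]; intros x y H; [destruct H|].
  apply conv_mono with (Rlev n); [|exact H].
  rewrite !Rlev_cond. apply step_mono, IH.
Qed.

Lemma Rlev_le (n m : nat) : n <= m -> inclusion term (Rlev n) (Rlev m).
Proof.
  induction 1 as [|m _ IH]; intros t u H; [exact H|].
  specialize (IH t u H). rewrite Rlev_cond in *. exact (step_mono _ _ (cond_succ m) t u IH).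
Qed.

(* A CLC-conversion uses finitely many steps, so it takes place at a single level. *)
Lemma clc_conv_level (x y : term) : clc_conv x y -> exists n, conv (Rlev n) x y.
Proof.
  induction 1 as [x y [n H] | x | x y _ [n H] | x y z _ [n H1] _ [m H2]].
  - exists n. now apply rst_step.
  - exists 0. apply rst_refl.
  - exists n. now apply rst_sym.
  - exists (Nat.max n m). apply rst_trans with y.
    + apply (conv_mono (Rlev n)); [apply Rlev_le; lia | exact H1].
    + apply (conv_mono (Rlev m)); [apply Rlev_le; lia | exact H2].
Qed.

Fixpoint ap (h : term) (args : list term) : term :=
  match args with
  | [] => h
  | a :: args' => ap (App h a) args'
  end.

Lemma ap_app (h : term) (l1 l2 : list term) : ap h (l1 ++ l2) = ap (ap h l1) l2.
Proof. revert h; induction l1 as [|a l1 IH]; intros h; simpl; auto. Qed.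

Fixpoint nargs (t : term) : nat :=
  match t with
  | App t' _ => Datatypes.S (nargs t')
  | _ => 0
  end.

Lemma nargs_ap (h : term) (args : list term) : nargs (ap h args) = nargs h + length args.
Proof.
  revert h; induction args as [|a args IH]; intros h; simpl; [lia | rewrite IH; simpl; lia].
Qed.

Lemma clc_red_appL (t t' a : term) : clc_red t t' -> clc_red (App t a) (App t' a).
Proof.
  induction 1 as [t t' [n H] | t | t t' t'' _ IH1 _ IH2].
  - apply rt_step. exists n. rewrite Rlev_cond in *. now apply step_appL.
  - apply rt_refl.
  - now apply rt_trans with (App t' a).
Qed.

Lemma clc_red_appR (t a a' : term) : clc_red a a' -> clc_red (App t a) (App t a').
Proof.
  induction 1 as [a a' [n H] | a | a a' a'' _ IH1 _ IH2].
  - apply rt_step. exists n. rewrite Rlev_cond in *. now apply step_appR.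
  - apply rt_refl.
  - now apply rt_trans with (App t a').
Qed.

Lemma clc_red_ap (h h' : term) (args : list term) :
  clc_red h h' -> clc_red (ap h args) (ap h' args).
Proof.
  revert h h'; induction args as [|a args IH]; intros h h' H; simpl; auto.
  apply IH, clc_red_appL, H.
Qed.

Definition boolc (b : bool) : term := if b then cT else cF.

(* [head_eval b t]: [t] head-evaluates to [boolc b]; see the opening comment.
   The [he_Cz] rule asks for both branches so that the invariant survives a
   later reduction of the test [z] to T or to F. *)
Inductive head_eval : bool -> term -> Prop :=
| he_T : head_eval true cT
| he_F : head_eval false cF
| he_K b x y l :
    head_eval b (ap x l) -> head_eval b (ap cK (x :: y :: l))
| he_S b x y z l :
    head_eval b (ap x (z :: App y z :: l)) -> head_eval b (ap cS (x :: y :: z :: l))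
| he_CT b z x y l :
    head_eval true z -> head_eval b (ap x l) -> head_eval b (ap cC (z :: x :: y :: l))
| he_CF b z x y l :
    head_eval false z -> head_eval b (ap y l) -> head_eval b (ap cC (z :: x :: y :: l))
| he_Cz b z x y l :
    clc_conv x y -> head_eval b (ap x l) -> head_eval b (ap y l) ->
    head_eval b (ap cC (z :: x :: y :: l)).

Lemma head_eval_atom (b : bool) (t : term) : head_eval b t -> nargs t = 0 -> t = boolc b.
Proof. destruct 1; intros Hn; rewrite ?nargs_ap in Hn; simpl in Hn; auto; lia. Qed.

Lemma head_eval_T (b : bool) : head_eval b cT -> b = true.
Proof. intros H. apply head_eval_atom in H as Hb; [|reflexivity]. now destruct b. Qed.

Lemma head_eval_F (b : bool) : head_eval b cF -> b = false.
Proof. intros H. apply head_eval_atom in H as Hb; [|reflexivity]. now destruct b. Qed.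

Lemma red_by_step (n : nat) (t u : term) (args : list term) :
  step (cond n) t u -> clc_red (ap t args) (ap u args).
Proof. intros H. apply clc_red_ap, rt_step. exists n. now rewrite Rlev_cond. Qed.

Lemma head_eval_sound (b : bool) (t : term) : head_eval b t -> clc_red t (boolc b).
Proof.
  induction 1 as [| | b x y l _ IH | b x y z l _ IH | b z x y l _ IHz _ IH
                 | b z x y l _ IHz _ IH | b z x y l Hxy _ IH _ _].
  - apply rt_refl.
  - apply rt_refl.
  - apply rt_trans with (ap x l); [apply (red_by_step 0 _ _ l), step_K | exact IH].
  - apply rt_trans with (ap x (z :: App y z :: l));
      [apply (red_by_step 0 _ _ l), step_S | exact IH].
  - apply rt_trans with (ap cC (cT :: x :: y :: l)).
    { apply (clc_red_ap _ _ l), clc_red_appL, clc_red_appL, clc_red_appR, IHz. }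
    apply rt_trans with (ap x l); [apply (red_by_step 0 _ _ l), step_CT | exact IH].
  - apply rt_trans with (ap cC (cF :: x :: y :: l)).
    { apply (clc_red_ap _ _ l), clc_red_appL, clc_red_appL, clc_red_appR, IHz. }
    apply rt_trans with (ap y l); [apply (red_by_step 0 _ _ l), step_CF | exact IH].
  - apply clc_conv_level in Hxy as [n Hxy].
    apply rt_trans with (ap x l);
      [apply (red_by_step (Datatypes.S n) _ _ l), step_Cz, Hxy | exact IH].
Qed.

Inductive contr (E : relation term) : relation term :=
| contr_CT x y : contr E (App (App (App cC cT) x) y) x
| contr_CF x y : contr E (App (App (App cC cF) x) y) y
| contr_Cz z x y : E x y -> contr E (App (App (App cC z) x) y) x
| contr_K x y : contr E (App (App cK x) y) x
| contr_S x y z : contr E (App (App (App cS x) y) z) (App (App x z) (App y z)).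

(* Parallel contraction of a set of disjoint redexes.  It is needed because
   [S x y z -> x z (y z)] duplicates [z], so a single step inside [z] becomes
   two steps afterwards. *)
Inductive par (E : relation term) : relation term :=
| par_refl t : par E t t
| par_contr t u : contr E t u -> par E t u
| par_app t t' a a' : par E t t' -> par E a a' -> par E (App t a) (App t' a').

Definition arity (c : term) : nat :=
  match c with cK => 2 | cS | cC => 3 | _ => 0 end.

Lemma contr_arity (E : relation term) (c R : term) (args : list term) :
  nargs c = 0 -> contr E (ap c args) R -> length args = arity c.
Proof.
  intros Hc H.
  assert (Hlen : length args <= 3).
  { assert (Hn : nargs (ap c args) <= 3) by (destruct H; simpl; lia).
    rewrite nargs_ap in Hn. lia. }
  destruct args as [|a [|b [|d [|e args]]]]; simpl in *; try lia;
    inversion H; subst; simpl in *; congruence.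
Qed.

Lemma app_same_length {A : Type} (l1 l2 m1 m2 : list A) :
  length l1 = length m1 -> l1 ++ l2 = m1 ++ m2 -> l1 = m1 /\ l2 = m2.
Proof.
  revert m1; induction l1 as [|a l1 IH]; intros [|b m1] Hlen Heq; simpl in *; try lia; auto.
  injection Heq as -> Heq. destruct (IH m1) as [-> ->]; auto.
Qed.

Lemma step_par (E : relation term) : inclusion term (step E) (par E).
Proof.
  intros t u H; induction H; auto using par_refl, par_app;
  apply par_contr; constructor; auto.
Qed.

Lemma Forall2_par_refl (E : relation term) (l : list term) : Forall2 (par E) l l.
Proof. induction l; constructor; auto using par_refl. Qed.

Lemma par_ap (E : relation term) (h h' : term) (l l' : list term) :
  par E h h' -> Forall2 (par E) l l' -> par E (ap h l) (ap h' l').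
Proof.
  intros Hh Hl; revert h h' Hh; induction Hl as [|a a' l l' Ha _ IH]; intros h h' Hh;
  simpl; auto using par_app.
Qed.

Lemma par_ap_inv (E : relation term) (c u : term) (l : list term) :
  nargs c = 0 -> par E (ap c l) u ->
  (exists l', u = ap c l' /\ Forall2 (par E) l l') \/
  (exists l1 l2 R l2', l = l1 ++ l2 /\ contr E (ap c l1) R /\
     u = ap R l2' /\ Forall2 (par E) l2 l2').
Proof.
  intros Hc; revert u; induction l as [|a l IH] using rev_ind; intros u H.
  - simpl in H. inversion H as [|? ? Hr|t t' a a' _ _]; subst; simpl in Hc.
    + left. exists []. split; [reflexivity | constructor].
    + right. exists [], [], u, []. auto.
    + discriminate.
  - rewrite ap_app in H. simpl in H.
    inversion H as [|? ? Hr|t t' a0 a' Ht Ha]; subst.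
    + left. exists (l ++ [a]). rewrite ap_app. auto using Forall2_par_refl.
    + right. exists (l ++ [a]), [], u, []. rewrite app_nil_r, ap_app. auto.
    + destruct (IH _ Ht) as [(l' & -> & Hl) | (l1 & l2 & R & l2' & -> & Hr & -> & Hl)].
      * left. exists (l' ++ [a']). rewrite ap_app. split; auto using Forall2_app.
      * right. exists l1, (l2 ++ [a]), R, (l2' ++ [a']).
        rewrite ap_app, app_assoc. repeat split; auto using Forall2_app.
Qed.

Lemma par_ap_inv_r (E : relation term) (c q : term) (l : list term) :
  nargs c = 0 -> par E q (ap c l) ->
  (exists l0, q = ap c l0 /\ Forall2 (par E) l0 l) \/
  (exists R l1 l2 l2', contr E R (ap c l1) /\ l = l1 ++ l2 /\
     q = ap R l2' /\ Forall2 (par E) l2' l2).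
Proof.
  intros Hc; revert q; induction l as [|a l IH] using rev_ind; intros q H.
  - simpl in H. inversion H as [|? ? Hr|t t' a a' _ _]; subst; simpl in Hc.
    + left. exists []. split; [reflexivity | constructor].
    + right. exists q, [], [], []. auto.
    + discriminate.
  - rewrite ap_app in H. simpl in H.
    inversion H as [|? ? Hr|t t' a0 a' Ht Ha]; subst.
    + left. exists (l ++ [a]). rewrite ap_app. auto using Forall2_par_refl.
    + right. exists q, (l ++ [a]), [], []. rewrite app_nil_r, ap_app. auto.
    + destruct (IH _ Ht) as [(l0 & -> & Hl) | (R & l1 & l2 & l2' & Hr & -> & -> & Hl)].
      * left. exists (l0 ++ [a0]). rewrite ap_app. split; auto using Forall2_app.
      * right. exists R, l1, (l2 ++ [a]), (l2' ++ [a0]).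
        rewrite ap_app, app_assoc. repeat split; auto using Forall2_app.
Qed.

Lemma par_redex_inv (E : relation term) (c u : term) (args l : list term) :
  nargs c = 0 -> length args = arity c -> par E (ap c (args ++ l)) u ->
  (exists args' l', u = ap c (args' ++ l') /\ Forall2 (par E) args args' /\
     Forall2 (par E) l l') \/
  (exists R l', contr E (ap c args) R /\ u = ap R l' /\ Forall2 (par E) l l').
Proof.
  intros Hc Hlen H.
  destruct (par_ap_inv E c u _ Hc H) as [(l' & -> & Hl) | (l1 & l2 & R & l2' & Heq & Hr & -> & Hl)].
  - left. apply Forall2_app_inv_l in Hl as (args' & l'' & Hargs & Hl & ->). eauto.
  - right. apply contr_arity in Hr as Hlen1; [|exact Hc].
    apply app_same_length in Heq as [<- <-]; [|congruence]. eauto.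
Qed.

Definition respects (E : relation term) : Prop :=
  forall x y, E x y -> forall b l, head_eval b (ap x l) <-> head_eval b (ap y l).

Section ParallelInvariance.

Variable E : relation term.
Hypothesis E_conv : inclusion term E clc_conv.

Lemma contr_clc_step : inclusion term (contr E) clc_step.
Proof.
  intros t u H. destruct H as [x y | x y | z x y Hxy | x y | x y z].
  - exists 0. apply step_CT.
  - exists 0. apply step_CF.
  - apply E_conv, clc_conv_level in Hxy as [n Hxy].
    exists (Datatypes.S n). now apply step_Cz.
  - exists 0. apply step_K.
  - exists 0. apply step_S.
Qed.

Lemma par_clc_red : inclusion term (par E) clc_red.
Proof.
  intros t u H; induction H as [t | t u H | t t' a a' _ IHt _ IHa].
  - apply rt_refl.
  - now apply rt_step, contr_clc_step.
  - apply rt_trans with (App t' a); [now apply clc_red_appL | now apply clc_red_appR].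
Qed.

Lemma par_clc_conv : inclusion term (par E) clc_conv.
Proof. intros t u H. now apply clos_rt_clos_rst, par_clc_red. Qed.

Hypothesis E_respects : respects E.

Lemma head_eval_expand (R R' : term) (b : bool) (l : list term) :
  contr E R R' -> head_eval b (ap R' l) -> head_eval b (ap R l).
Proof.
  intros Hr H. destruct Hr as [x y | x y | z x y Hxy | x y | x y z].
  - now apply he_CT; [apply he_T |].
  - now apply he_CF; [apply he_F |].
  - apply he_Cz; [apply E_conv, Hxy | exact H |]. now apply (E_respects x y Hxy).
  - now apply he_K.
  - now apply he_S.
Qed.

Ltac invert_arg_lists :=
  repeat match goal with
  | H : Forall2 _ (_ :: _) _ |- _ => inversion_clear H
  | H : Forall2 _ _ (_ :: _) |- _ => inversion_clear H
  | H : Forall2 _ [] _ |- _ => inversion_clear H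
  | H : Forall2 _ _ [] |- _ => inversion_clear H
  end.

Lemma head_eval_par_fwd (b : bool) (q : term) :
  head_eval b q -> forall u, par E q u -> head_eval b u.
Proof.
  induction 1 as [| | b x y l _ IH | b x y z l _ IH | b z x y l Hz IHz _ IH
                 | b z x y l Hz IHz _ IH | b z x y l Hxy _ IHx _ IHy]; intros u Hd.
  - inversion Hd as [|? ? Hr|]; subst; [apply he_T | inversion Hr].
  - inversion Hd as [|? ? Hr|]; subst; [apply he_F | inversion Hr].
  - destruct (par_redex_inv E cK u [x; y] l eq_refl eq_refl Hd)
      as [(args' & l' & -> & Hargs & Hl) | (R & l' & Hr & -> & Hl)];
      [invert_arg_lists | simpl in Hr; inversion Hr; subst].
    + apply he_K, IH. eauto using par_ap.
    + apply IH. eauto using par_ap, par_refl.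
  - destruct (par_redex_inv E cS u [x; y; z] l eq_refl eq_refl Hd)
      as [(args' & l' & -> & Hargs & Hl) | (R & l' & Hr & -> & Hl)];
      [invert_arg_lists | simpl in Hr; inversion Hr; subst].
    + apply he_S, IH. eauto 7 using par_ap, par_app, Forall2_cons.
    + apply IH, (par_ap E (App (App x z) (App y z))); auto using par_refl.
  - destruct (par_redex_inv E cC u [z; x; y] l eq_refl eq_refl Hd)
      as [(args' & l' & -> & Hargs & Hl) | (R & l' & Hr & -> & Hl)];
      [invert_arg_lists | simpl in Hr; inversion Hr; subst].
    + apply he_CT; eauto using par_ap.
    + apply IH. eauto using par_ap, par_refl.
    + discriminate (head_eval_F _ Hz).
    + apply IH. eauto using par_ap, par_refl.
  - destruct (par_redex_inv E cC u [z; x; y] l eq_refl eq_refl Hd)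
      as [(args' & l' & -> & Hargs & Hl) | (R & l' & Hr & -> & Hl)];
      [invert_arg_lists | simpl in Hr; inversion Hr; subst].
    + apply he_CF; eauto using par_ap.
    + discriminate (head_eval_T _ Hz).
    + apply IH. eauto using par_ap, par_refl.
    + apply (E_respects R y); auto. apply IH. eauto using par_ap, par_refl.
  - destruct (par_redex_inv E cC u [z; x; y] l eq_refl eq_refl Hd)
      as [(args' & l' & -> & Hargs & Hl) | (R & l' & Hr & -> & Hl)];
      [invert_arg_lists | simpl in Hr; inversion Hr; subst].
    + apply he_Cz; eauto using par_ap.
      apply rst_trans with x; [apply rst_sym, par_clc_conv; assumption |].
      apply rst_trans with y; [exact Hxy | apply par_clc_conv; assumption].
    + apply IHx. eauto using par_ap, par_refl.
    + apply IHy. eauto using par_ap, par_refl.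
    + apply IHx. eauto using par_ap, par_refl.
Qed.

Lemma head_eval_par_bwd_spine (c : term) (L : list term) (b : bool) :
  nargs c = 0 ->
  (forall l0, Forall2 (par E) l0 L -> head_eval b (ap c l0)) ->
  forall q, par E q (ap c L) -> head_eval b q.
Proof.
  intros Hc Hspine q Hd.
  destruct (par_ap_inv_r E c q L Hc Hd)
    as [(l0 & -> & Hl) | (R & l1 & l2 & l2' & Hr & -> & -> & Hl)]; auto.
  apply (head_eval_expand R (ap c l1)); [exact Hr |].
  rewrite <- ap_app. apply Hspine, Forall2_app; auto using Forall2_par_refl.
Qed.

Lemma head_eval_par_bwd (b : bool) (u : term) :
  head_eval b u -> forall q, par E q u -> head_eval b q.
Proof.
  induction 1 as [| | b x y l _ IH | b x y z l _ IH | b z x y l Hz IHz _ IH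
                 | b z x y l Hz IHz _ IH | b z x y l Hxy _ IHx _ IHy];
    [change cT with (ap cT []) | change cF with (ap cF []) | ..];
    apply head_eval_par_bwd_spine; try reflexivity; intros l0 Hl0;
    try (apply Forall2_app_inv_r in Hl0 as (args0 & l0' & Hargs & Hl & ->));
    invert_arg_lists.
  - apply he_T.
  - apply he_F.
  - apply he_K, IH. eauto using par_ap.
  - apply he_S, IH. eauto 7 using par_ap, par_app, Forall2_cons.
  - apply he_CT; eauto using par_ap.
  - apply he_CF; eauto using par_ap.
  - apply he_Cz; eauto using par_ap.
    apply rst_trans with x; [apply par_clc_conv; assumption |].
    apply rst_trans with y; [exact Hxy | apply rst_sym, par_clc_conv; assumption].
Qed.

Lemma respects_conv_step : respects (conv (step E)).
Proof.
  intros x y H; induction H as [x y Hs | x | x y _ IH | x y z _ IH1 _ IH2]; intros b l.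
  - assert (Hp : par E (ap x l) (ap y l))
      by (apply par_ap; [apply step_par, Hs | apply Forall2_par_refl]).
    split; intros Hh;
      [exact (head_eval_par_fwd b _ Hh _ Hp) | exact (head_eval_par_bwd b _ Hh _ Hp)].
  - reflexivity.
  - symmetry; apply IH.
  - rewrite IH1; apply IH2.
Qed.

End ParallelInvariance.

Lemma cond_clc_conv (n : nat) : inclusion term (cond n) clc_conv.
Proof.
  destruct n as [|n]; intros x y H; [destruct H |].
  apply (conv_mono (Rlev n)); [| exact H].
  intros t u Htu. now exists n.
Qed.

Lemma respects_cond (n : nat) : respects (cond n).
Proof.
  induction n as [|n IH]; [intros x y [] |].
  simpl. rewrite Rlev_cond. exact (respects_conv_step (cond n) (cond_clc_conv n) IH).
Qed.

Lemma clc_conv_head_eval (x y : term) (b : bool) :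
  clc_conv x y -> head_eval b x <-> head_eval b y.
Proof.
  intros H. apply clc_conv_level in H as [n H].
  exact (respects_cond (Datatypes.S n) x y H b []).
Qed.

Theorem mainTheorem3 :
  (forall q : term, clc_conv q cF -> clc_red q cF) /\ ~ clc_conv cT cF.
Proof.
  split.
  - intros q H. apply (head_eval_sound false), (clc_conv_head_eval q cF false H), he_F.
  - intros H. pose proof (proj2 (clc_conv_head_eval _ _ false H) he_F) as HT.
    discriminate (head_eval_T _ HT).
Qed.
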